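(* Given index sets $\hat{\mathcal{R}}\subseteq\mathcal{R}$ and $\hat{\mathcal{L}}\subseteq\mathcal{L}$, we have: 1. $[\theta^*(C)]_{\hat{\mathcal{R}}}=\alpha$ and $[\theta^*(C)]_{\hat{\mathcal{L}}}=\beta$. 2. Let $\hat{\mathcal{S}}=\hat{\mathcal{R}}\cup\hat{\mathcal{L}}$, $|\hat{\mathcal{S}}^{\rm c}|$ be the cardinality of $\hat{\mathcal{S}}^{\rm c}$, $\hat{\mathbf{G}}_{11}=[\mathbf{Z}^T]_{\hat{\mathcal{S}}^{\rm c}}^T[\mathbf{Z}^T]_{\hat{\mathcal{S}}^{\rm c}}$, $\hat{\mathbf{G}}_{12}=[\mathbf{Z}^T]_{\hat{\mathcal{S}}^{\rm c}}^T[\mathbf{Z}^T]_{\hat{\mathcal{S}}}$ and $\hat{\mathbf{y}}=[\bar{\mathbf{y}}]_{\hat{\mathcal{S}}^{\rm c}}-C\hat{\mathbf{G}}_{12}[\theta^*(C)]_{\hat{\mathcal{S}}}$. Then $[\theta^*(C)]_{\hat{\mathcal{S}}^{\rm c}}$ can be computed by solving $$\min_{\hat{\theta}\in\mathbb{R}^{|\hat{\mathcal{S}}^{\rm c}|}}\ \frac{C}{2}\hat{\theta}^T\hat{\mathbf{G}}_{11}\hat{\theta}-\hat{\mathbf{y}}^T\hat{\theta}\quad \text{s.t. } \hat{\theta}\in[\alpha,\beta]^{|\hat{\mathcal{S}}^{\rm c}|}.$$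
   Context: Observations $\{\mathbf{x}_i,y_i\}_{i=1}^l$ with $\mathbf{x}_i\in\mathbb{R}^n$, $y_i\in\mathbb{R}$, and scalars $a_i,b_i$. Consider the primal problem $\min_{\mathbf{w}\in\mathbb{R}^n}\frac12\|\mathbf{w}\|^2+C\sum_{i=1}^l\varphi(\mathbf{w}^T(a_i\mathbf{x}_i)+b_iy_i)$ with $C>0$, where $\varphi:\mathbb{R}\to\mathbb{R}_+$ is a nonconstant continuous sublinear (convex and positively homogeneous) function; its conjugate $\varphi^*$ is the indicator function of a closed interval $[\alpha,\beta]$ with $\alpha<\beta$. Let $\mathbf{Z}=(a_1\mathbf{x}_1,\ldots,a_l\mathbf{x}_l)^T$ and $\bar{\mathbf{y}}=(b_1y_1,\ldots,b_ly_l)^T$. The dual problem is $\min_{\theta\in[\alpha,\beta]^l}\frac{C}{2}\|\mathbf{Z}^T\theta\|^2-\langle\bar{\mathbf{y}},\theta\rangle$. Let $\mathbf{w}^*(C)$ and $\theta^*(C)$ be the primal and dual optimal solutions, related by $\mathbf{w}^*(C)=-C\mathbf{Z}^T\theta^*(C)$. Define $\mathcal{R}=\{i:-\langle\mathbf{w}^*(C),a_i\mathbf{x}_i\rangle>b_iy_i\}$ and $\mathcal{L}=\{i:-\langle\mathbf{w}^*(C),a_i\mathbf{x}_i\rangle<b_iy_i\}$ (indices of non-support vectors). Notation: $\mathcal{I}=\{1,\ldots,l\}$; for $\mathcal{J}\subseteq\mathcal{I}$, $\mathcal{J}^{\rm c}=\mathcal{I}\setminus\mathcal{J}$, $[\mathbf{x}]_{\mathcal{J}}$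 is the subvector of $\mathbf{x}$ indexed by $\mathcal{J}$ and $[\mathbf{M}]_{\mathcal{J}}$ is the submatrix of columns of $\mathbf{M}$ indexed by $\mathcal{J}$. *)

From HB Require Import structures.
From mathcomp Require Import all_boot all_order all_algebra.
From mathcomp Require Import all_classical all_reals all_analysis.
Set Implicit Arguments. Unset Strict Implicit. Unset Printing Implicit Defensive.
Import Order.TTheory GRing.Theory Num.Theory.
Import numFieldNormedType.Exports.
Local Open Scope ring_scope.

(* The convex conjugate phi^*(s) = sup_t (s t - phi t) is the indicator function
   of [alpha, beta]: it equals 0 on [alpha,beta] and +oo outside. *)
Definition conj_is_indicator (R : realType) (phi : R -> R) (alpha beta : R) : Prop :=
  (forall s, alpha <= s <= beta ->
     (forall t, s * t - phi t <= 0) /\ (forall e, 0 < e -> exists t, - e < s * t - phi t))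
  /\ (forall s, ~ (alpha <= s <= beta) -> forall M, exists t, M < s * t - phi t).

Definition convex_fun (R : realType) (phi : R -> R) : Prop :=
  forall x y t, 0 <= t <= 1 -> phi (t * x + (1 - t) * y) <= t * phi x + (1 - t) * phi y.

Definition pos_homogeneous (R : realType) (phi : R -> R) : Prop :=
  forall t x, 0 < t -> phi (t * x) = t * phi x.

Definition admissible_loss (R : realType) (phi : R -> R) (alpha beta : R) : Prop :=
  [/\ forall t, 0 <= phi t,
      exists x y, phi x != phi y,
      continuous phi,
      convex_fun phi & pos_homogeneous phi]
  /\ conj_is_indicator phi alpha beta.

Definition Zmat (R : realType) (l n : nat) (a : 'I_l -> R) (x : 'I_l -> 'rV[R]_n)
  : 'M[R]_(l, n) := \matrix_(i, j) (a i * x i 0 j).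

Definition ybar (R : realType) (l : nat) (b y : 'I_l -> R) : 'cV[R]_l :=
  \col_i (b i * y i).

Definition sqnorm (R : realType) (n : nat) (v : 'cV[R]_n) : R := \sum_j v j 0 ^+ 2.

Definition dotv (R : realType) (n : nat) (u v : 'cV[R]_n) : R := \sum_j u j 0 * v j 0.

Definition primal_obj (R : realType) (l n : nat) (phi : R -> R) (C : R)
  (Z : 'M[R]_(l, n)) (yb : 'cV[R]_l) (w : 'cV[R]_n) : R :=
  sqnorm w / 2 + C * \sum_i phi ((Z *m w) i 0 + yb i 0).

Definition dual_obj (R : realType) (l n : nat) (C : R)
  (Z : 'M[R]_(l, n)) (yb : 'cV[R]_l) (theta : 'cV[R]_l) : R :=
  C / 2 * sqnorm (Z^T *m theta) - dotv yb theta.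

Definition in_box (R : realType) (m : nat) (alpha beta : R) (v : 'cV[R]_m) : Prop :=
  forall i, alpha <= v i 0 <= beta.

(* the k-th element (in increasing order) of A *)
Definition subidx (l : nat) (A : {set 'I_l}) (k : 'I_#|A|) : 'I_l := enum_val k.

(* rows of M indexed by A; [v]_A = subrows A v for a column vector v, and
   the column submatrix [Z^T]_A equals (subrows A Z)^T *)
Definition subrows (R : Type) (l n : nat) (A : {set 'I_l}) (M : 'M[R]_(l, n))
  : 'M[R]_(#|A|, n) := rowsub (@subidx l A) M.

Definition reduced_obj (R : realType) (m : nat) (C : R) (G11 : 'M[R]_m)
  (yh : 'cV[R]_m) (th : 'cV[R]_m) : R :=
  C / 2 * (th^T *m G11 *m th) 0 0 - dotv yh th.

From HB Require Import structures.
From mathcomp Require Import all_boot all_order all_algebra.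
From mathcomp Require Import all_classical all_reals all_analysis.
From mathcomp Require Import ring lra.
Import Order.TTheory GRing.Theory Num.Theory.
Set Implicit Arguments. Unset Strict Implicit.
Local Open Scope ring_scope.

(* The dual objective is a convex quadratic whose gradient at theta is
   C Z Z^T theta - ybar = -Z w - ybar (with w = -C Z^T theta).  On an index of
   R-hat (resp. L-hat) this gradient coordinate is positive (resp. negative), so
   a box minimizer must sit at the lower (resp. upper) bound: otherwise moving
   that coordinate inwards decreases the objective.  Once the coordinates in
   S-hat are frozen, the dual objective is the reduced objective in the
   remaining coordinates plus a constant, so the two minimization problems have
   the same minimizers. *)

Section BoxQP.
Variable R : realType.

Lemma dotvE m (u v : 'cV[R]_m) : dotv u v = (u^T *m v) 0 0.
Proof. by rewrite /dotv mxE; apply: eq_bigr => j _; rewrite mxE. Qed.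

Lemma sqnormE m (v : 'cV[R]_m) : sqnorm v = dotv v v.
Proof. by rewrite /sqnorm; apply: eq_bigr => j _; rewrite expr2. Qed.

Lemma sqnorm_ge0 m (v : 'cV[R]_m) : 0 <= sqnorm v.
Proof. by apply: sumr_ge0 => j _; rewrite sqr_ge0. Qed.

Lemma dotvC m (u v : 'cV[R]_m) : dotv u v = dotv v u.
Proof. by rewrite !dotvE -[v^T *m u]trmxK trmx_mul trmxK [in RHS]mxE. Qed.

Lemma dotvDl m (u v w : 'cV[R]_m) : dotv (u + v) w = dotv u w + dotv v w.
Proof. by rewrite !dotvE linearD mulmxDl [LHS]mxE. Qed.

Lemma dotvZl m t (u w : 'cV[R]_m) : dotv (t *: u) w = t * dotv u w.
Proof. by rewrite !dotvE linearZ -scalemxAl [LHS]mxE. Qed.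

Lemma dotvNl m (u w : 'cV[R]_m) : dotv (- u) w = - dotv u w.
Proof. by rewrite -scaleN1r dotvZl mulN1r. Qed.

Lemma dotvBl m (u v w : 'cV[R]_m) : dotv (u - v) w = dotv u w - dotv v w.
Proof. by rewrite dotvDl dotvNl. Qed.

Lemma dotvDr m (u v w : 'cV[R]_m) : dotv w (u + v) = dotv w u + dotv w v.
Proof. by rewrite dotvC dotvDl !(dotvC w). Qed.

Lemma dotvZr m t (u w : 'cV[R]_m) : dotv w (t *: u) = t * dotv w u.
Proof. by rewrite dotvC dotvZl dotvC. Qed.

Lemma dotv_mull m k (M : 'M[R]_(m, k)) u v : dotv (M *m u) v = dotv u (M^T *m v).
Proof. by rewrite !dotvE trmx_mul mulmxA. Qed.

Lemma dotv_delta m (i : 'I_m) (v : 'cV[R]_m) : dotv v (delta_mx i 0) = v i 0.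
Proof. by rewrite dotvC dotvE trmx_delta -rowE mxE. Qed.

Definition dual_grad l n (C : R) (Z : 'M[R]_(l, n)) (yb th : 'cV[R]_l) : 'cV[R]_l :=
  C *: (Z *m (Z^T *m th)) - yb.

Lemma dual_grad_primal l n (C : R) (Z : 'M[R]_(l, n)) yb th w :
  w = - C *: (Z^T *m th) -> dual_grad C Z yb th = - (Z *m w) - yb.
Proof. by move->; rewrite /dual_grad -scalemxAr scaleNr opprK. Qed.

Lemma dual_obj_shift l n (C : R) (Z : 'M[R]_(l, n)) yb th d t :
  dual_obj C Z yb (th + t *: d) = dual_obj C Z yb th
    + t * dotv (dual_grad C Z yb th) d + t ^+ 2 * (C / 2 * sqnorm (Z^T *m d)).
Proof.
rewrite /dual_obj /dual_grad !sqnormE mulmxDr -scalemxAr.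
rewrite !dotvDl !dotvDr !dotvZl !dotvZr dotvNl (dotv_mull Z).
rewrite (dotvC (Z^T *m d) (Z^T *m th)) (dotvC yb d).
move: (dotv (Z^T *m th) _) (dotv (Z^T *m th) _) (dotv (Z^T *m d) _)
      (dotv yb th) (dotv d yb) => p1 p2 p3 p4 p5.
by field.
Qed.

Lemma slope_ge0_of_quadratic_ge0 (A B T : R) : 0 <= A -> 0 < T ->
  (forall t, 0 < t -> t <= T -> 0 <= B * t + t ^+ 2 * A) -> 0 <= B.
Proof.
move=> A0 T0 H; rewrite leNgt; apply/negP => B0.
pose t := Num.min T (- B / (A + 1)).
have A1 : 0 < A + 1 by lra.
have t0 : 0 < t by rewrite lt_min T0 divr_gt0 // oppr_gt0.
have tB : t * (A + 1) <= - B by rewrite -ler_pdivlMr // ge_min lexx orbT.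
have tT : t <= T by rewrite ge_min lexx.
have := H t t0 tT.
nra.
Qed.

Lemma box_min_dir_ge0 l n (C : R) (Z : 'M[R]_(l, n)) yb alpha beta th d T :
  0 <= C -> 0 < T ->
  (forall th', in_box alpha beta th' -> dual_obj C Z yb th <= dual_obj C Z yb th') ->
  (forall t, 0 < t -> t <= T -> in_box alpha beta (th + t *: d)) ->
  0 <= dotv (dual_grad C Z yb th) d.
Proof.
move=> C0 T0 hmin hbox.
apply: (slope_ge0_of_quadratic_ge0 (A := C / 2 * sqnorm (Z^T *m d))) T0 _ => [|t t0 tT].
  by rewrite mulr_ge0 ?sqnorm_ge0 ?divr_ge0.
have := hmin _ (hbox t t0 tT); rewrite dual_obj_shift mulrC; lra.
Qed.

Section BoxMinimizer.
Variables (l n : nat) (C alpha beta : R) (Z : 'M[R]_(l, n)) (yb th : 'cV[R]_l).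
Hypotheses (C_ge0 : 0 <= C) (th_box : in_box alpha beta th).
Hypothesis th_min :
  forall th', in_box alpha beta th' -> dual_obj C Z yb th <= dual_obj C Z yb th'.

Lemma in_box_shift_coord (i : 'I_l) (s t : R) :
  alpha <= th i 0 + t * s <= beta -> in_box alpha beta (th + t *: (s *: delta_mx i 0)).
Proof.
move=> hi j; rewrite !mxE andbT.
case: (eqVneq j i) => [-> | _] /=.
  by rewrite mulr1n mulr1.
by rewrite mulr0n !mulr0 addr0.
Qed.

Lemma box_min_grad_gt0 i : 0 < dual_grad C Z yb th i 0 -> th i 0 = alpha.
Proof.
move=> g0; have /andP [ai ib] := th_box i.
apply/eqP; rewrite eq_le ai andbT leNgt; apply/negP => lt_ai.
suff : 0 <= - dual_grad C Z yb th i 0 by lra.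
rewrite -mulN1r -(dotv_delta i) -dotvZr.
apply: (box_min_dir_ge0 (T := th i 0 - alpha) C_ge0 _ th_min) => [|t t0 tT].
  by rewrite subr_gt0.
by apply: in_box_shift_coord; apply/andP; split; lra.
Qed.

Lemma box_min_grad_lt0 i : dual_grad C Z yb th i 0 < 0 -> th i 0 = beta.
Proof.
move=> g0; have /andP [ai ib] := th_box i.
apply/eqP; rewrite eq_le ib /= leNgt; apply/negP => lt_ib.
suff : 0 <= dual_grad C Z yb th i 0 by lra.
rewrite -[dual_grad _ _ _ _ i 0]mul1r -(dotv_delta i) -dotvZr.
apply: (box_min_dir_ge0 (T := beta - th i 0) C_ge0 _ th_min) => [|t t0 tT].
  by rewrite subr_gt0.
by apply: in_box_shift_coord; apply/andP; split; lra.
Qed.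

End BoxMinimizer.

Lemma trmx_mul_subrows l (S : {set 'I_l}) p q (M : 'M[R]_(l, p)) (N : 'M[R]_(l, q)) :
  M^T *m N = (subrows (~: S) M)^T *m subrows (~: S) N + (subrows S M)^T *m subrows S N.
Proof.
apply/matrixP => j k; rewrite !mxE (bigID (mem S)) /= addrC.
congr (_ + _).
- rewrite (eq_bigl (mem (~: S))); last by move=> i; rewrite !inE.
  by rewrite (big_enum_val (A := mem (~: S))); apply: eq_bigr => i _; rewrite !mxE.
- by rewrite (big_enum_val (A := mem S)); apply: eq_bigr => i _; rewrite !mxE.
Qed.

Lemma subrows_eq l (S : {set 'I_l}) (u v : 'cV[R]_l) :
  {in S, forall i, u i 0 = v i 0} -> subrows S u = subrows S v.
Proof. by move=> h; apply/matrixP => k j; rewrite !mxE (ord1 j) h ?enum_valP. Qed.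

Lemma in_box_subrows l (S : {set 'I_l}) alpha beta (v : 'cV[R]_l) :
  in_box alpha beta v -> in_box alpha beta (subrows S v).
Proof. by move=> hv k; rewrite mxE. Qed.

Lemma in_box_subrowsC l (S : {set 'I_l}) alpha beta (v : 'cV[R]_l) :
  {in S, forall i, alpha <= v i 0 <= beta} -> in_box alpha beta (subrows (~: S) v) ->
  in_box alpha beta v.
Proof.
move=> hS hSc i; case: (boolP (i \in S)) => [/hS // | iS].
have iSc : i \in ~: S by rewrite inE.
by have := hSc (enum_rank_in iSc i); rewrite mxE /subidx enum_rankK_in.
Qed.

Definition extend_sub l (A : {set 'I_l}) (th : 'cV[R]_#|A|) (base : 'cV[R]_l) : 'cV[R]_l :=
  \col_i (if [pick k | @subidx l A k == i] is Some k then th k 0 else base i 0).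
Arguments extend_sub {l} A th base.

Lemma subrows_extend_sub l (A : {set 'I_l}) th base : subrows A (extend_sub A th base) = th.
Proof.
apply/matrixP => k j; rewrite !mxE (ord1 j).
case: pickP => [k' /eqP/enum_val_inj -> // | /(_ k)]; by rewrite eqxx.
Qed.

Lemma extend_sub_out l (A : {set 'I_l}) th base i :
  i \notin A -> extend_sub A th base i 0 = base i 0.
Proof.
move=> iA; rewrite mxE; case: pickP => [k /eqP ek | //].
by move: iA; rewrite -ek enum_valP.
Qed.

Lemma in_box_extend_sub l (A : {set 'I_l}) alpha beta th base :
  in_box alpha beta th -> in_box alpha beta base -> in_box alpha beta (extend_sub A th base).
Proof. by move=> hth hbase i; rewrite mxE; case: pickP. Qed.

Lemma dual_obj_reduced l n C (Z : 'M[R]_(l, n)) yb (S : {set 'I_l}) (ths th : 'cV[R]_l) :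
  subrows S th = subrows S ths ->
  dual_obj C Z yb th =
  reduced_obj C (subrows (~: S) Z *m (subrows (~: S) Z)^T)
     (subrows (~: S) yb - C *: ((subrows (~: S) Z *m (subrows S Z)^T) *m subrows S ths))
     (subrows (~: S) th)
  + (C / 2 * sqnorm ((subrows S Z)^T *m subrows S ths)
     - dotv (subrows S yb) (subrows S ths)).
Proof.
move=> thS.
set Zc := subrows (~: S) Z; set thc := subrows (~: S) th.
set q := (subrows S Z)^T *m subrows S ths.
have ZthE : Z^T *m th = Zc^T *m thc + q by rewrite (trmx_mul_subrows S) thS.
have ybE : dotv yb th = dotv (subrows (~: S) yb) thc + dotv (subrows S yb) (subrows S ths).
  by rewrite !dotvE (trmx_mul_subrows S) [LHS]mxE thS.
have quadE : (thc^T *m (Zc *m Zc^T) *m thc) 0 0 = dotv (Zc^T *m thc) (Zc^T *m thc).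
  by rewrite dotvE trmx_mul trmxK !mulmxA.
rewrite /dual_obj /reduced_obj !sqnormE ZthE ybE quadE dotvBl dotvZl -mulmxA (dotv_mull Zc).
rewrite dotvDl !dotvDr (dotvC q (Zc^T *m thc)).
move: (dotv (Zc^T *m thc) _) (dotv q _) (dotv _ q) (dotv (subrows (~: S) yb) thc)
      (dotv (subrows S yb) _) => p1 p2 p3 p4 p5.
by field.
Qed.

Lemma dual_obj_le_reduced l n C (Z : 'M[R]_(l, n)) yb (S : {set 'I_l}) (ths th1 th2 : 'cV[R]_l) :
  subrows S th1 = subrows S ths -> subrows S th2 = subrows S ths ->
  let G11 := subrows (~: S) Z *m (subrows (~: S) Z)^T in
  let yhat := subrows (~: S) yb - C *: ((subrows (~: S) Z *m (subrows S Z)^T) *m subrows S ths) in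
  (dual_obj C Z yb th1 <= dual_obj C Z yb th2) =
  (reduced_obj C G11 yhat (subrows (~: S) th1) <= reduced_obj C G11 yhat (subrows (~: S) th2)).
Proof. by move=> h1 h2 /=; rewrite (dual_obj_reduced _ _ _ h1) (dual_obj_reduced _ _ _ h2) lerD2r. Qed.

End BoxQP.

Theorem lemma3 (R : realType) (l n : nat)
  (x : 'I_l -> 'rV[R]_n) (y a b : 'I_l -> R)
  (phi : R -> R) (alpha beta C : R)
  (hab : alpha < beta) (hC : 0 < C)
  (hphi : admissible_loss phi alpha beta)
  (wstar : 'cV[R]_n) (thstar : 'cV[R]_l)
  (hw : forall w, primal_obj phi C (Zmat a x) (ybar b y) wstar
                  <= primal_obj phi C (Zmat a x) (ybar b y) w)
  (hth_feas : in_box alpha beta thstar)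
  (hth : forall th, in_box alpha beta th ->
           dual_obj C (Zmat a x) (ybar b y) thstar <= dual_obj C (Zmat a x) (ybar b y) th)
  (hrel : wstar = - C *: ((Zmat a x)^T *m thstar))
  (Rhat Lhat : {set 'I_l})
  (hR : forall i, i \in Rhat -> - (Zmat a x *m wstar) i 0 > ybar b y i 0)
  (hL : forall i, i \in Lhat -> - (Zmat a x *m wstar) i 0 < ybar b y i 0) :
  let Z := Zmat a x in
  let S := Rhat :|: Lhat in
  let Sc := ~: S in
  let G11 := subrows Sc Z *m (subrows Sc Z)^T in
  let G12 := subrows Sc Z *m (subrows S Z)^T in
  let yhat := subrows Sc (ybar b y) - C *: (G12 *m subrows S thstar) in
  [/\ (forall i, i \in Rhat -> thstar i 0 = alpha),
      (forall i, i \in Lhat -> thstar i 0 = beta),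
      (* [theta*]_{S^c} solves the reduced problem ... *)
      in_box alpha beta (subrows Sc thstar) /\
      (forall th, in_box alpha beta th ->
         reduced_obj C G11 yhat (subrows Sc thstar) <= reduced_obj C G11 yhat th)
    & (* ... and any solution of the reduced problem, completed by the fixed
         values alpha on Rhat and beta on Lhat, is a dual optimal solution *)
      forall th : 'cV[R]_#|Sc|,
        in_box alpha beta th ->
        (forall th', in_box alpha beta th' ->
           reduced_obj C G11 yhat th <= reduced_obj C G11 yhat th') ->
        forall full : 'cV[R]_l,
          (forall i, i \in Rhat -> full i 0 = alpha) ->
          (forall i, i \in Lhat -> full i 0 = beta) ->
          subrows Sc full = th ->
          in_box alpha beta full /\
          (forall th', in_box alpha beta th' ->
             dual_obj C Z (ybar b y) full <= dual_obj C Z (ybar b y) th')].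
Proof.
move=> Z S Sc G11 G12 yhat.
have gradE := dual_grad_primal (ybar b y) hrel.
have thR : forall i, i \in Rhat -> thstar i 0 = alpha.
  move=> i /hR g0; apply: (box_min_grad_gt0 (ltW hC) hth_feas hth).
  by rewrite gradE !mxE in g0 *; lra.
have thL : forall i, i \in Lhat -> thstar i 0 = beta.
  move=> i /hL g0; apply: (box_min_grad_lt0 (ltW hC) hth_feas hth).
  by rewrite gradE !mxE in g0 *; lra.
have fixedS : forall v : 'cV[R]_l, {in Rhat, forall i, v i 0 = alpha} ->
    {in Lhat, forall i, v i 0 = beta} -> subrows S v = subrows S thstar.
  move=> v vR vL; apply: subrows_eq => i; rewrite inE => /orP [] iS.
    by rewrite vR ?thR.
  by rewrite vL ?thL.
have red_min : forall th, in_box alpha beta th ->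
    reduced_obj C G11 yhat (subrows Sc thstar) <= reduced_obj C G11 yhat th.
  move=> th thbox; rewrite -[th in X in _ <= X](subrows_extend_sub th thstar).
  rewrite -dual_obj_le_reduced //; first exact/hth/in_box_extend_sub.
  by apply: subrows_eq => i iS; rewrite extend_sub_out // inE iS.
split=> //; first by split=> //; apply: in_box_subrows.
move=> th thbox thmin full fullR fullL fullSc; subst th.
have fullS := fixedS full fullR fullL.
split.
  apply: in_box_subrowsC thbox => i; rewrite inE => /orP [] iS.
    by rewrite fullR // lexx ltW.
  by rewrite fullL // lexx ltW.
move=> th' /hth; apply: le_trans.
have := thmin _ (in_box_subrows hth_feas).
by rewrite -(dual_obj_le_reduced C Z (ybar b y) fullS erefl).
Qed.
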